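(* Let $E$ be an Anderson $t$-module of dimension $d$ over $\mathscr O_L$ and $P\in A$ a monic irreducible polynomial. For all $a\in A\setminus\{0\}$ and all $x\in\mathbb T_z(L_P)^d\setminus\{0\}$, we have $\widetilde E_a(x)\ne0$.
   Context: $\mathbb F_q$ finite field, $A=\mathbb F_q[\theta]$, $K=\mathbb F_q(\theta)$, $L/K$ finite, $\mathscr O_L$ integral closure of $A$ in $L$, $\tau$ the $q$-Frobenius. An Anderson $t$-module of dimension $d$ over $\mathscr O_L$ is an $\mathbb F_q$-algebra homomorphism $E:A\to M_d(\mathscr O_L)\{\tau\}$, $E_a=\sum_iE_{a,i}\tau^i$, with $(E_{a,0}-aI_d)^d=0$ and $\deg_\tau E_\theta>0$. With $z$ an indeterminate fixed by $\tau$, the $z$-twist is $\widetilde E_a=\sum_iE_{a,i}z^i\tau^i$, acting on $d$-tuples. $K_P$ is the $P$-adic completion of $K$, $\mathbb T_z(K_P)$ the Tate algebra in $z$ over $K_P$, and $\mathbb T_z(L_P)=L\otimes_K\mathbb T_z(K_P)$, on which $\tau$ acts by $q$-th powers on $L\otimes K_P$-coefficients and trivially on $z$. *)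

From HB Require Import structures.
From mathcomp Require Import all_boot all_order all_algebra all_field.
From mathcomp Require Import fraction.
Set Implicit Arguments. Unset Strict Implicit. Unset Printing Implicit Defensive.
Import Order.TTheory GRing.Theory Num.Theory.
Local Open Scope ring_scope.

(* F = F_q (q = #|F|),  A = {poly F},  K = Frac A = F_q(theta). *)
Notation Kfrac F := {fraction {poly F}}.

Definition embA (F : finFieldType) (L : fieldExtType (Kfrac F)) (a : {poly F}) : L :=
  (tofrac a)%:A.

Definition integral_over_A (F : finFieldType) (L : fieldExtType (Kfrac F)) (x : L) : Prop :=
  exists p : {poly {poly F}}, p \is monic /\ root (map_poly (@embA F L) p) x.

Definition pval (F : finFieldType) (P f : {poly F}) : nat :=
  \max_(m < size f | (P ^+ m %| f)%R) (m : nat).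

Definition vclose (KP : fieldType) (v : KP -> int) (N : int) (x y : KP) : Prop :=
  x = y \/ N <= v (x - y).

(* (KP, iota, v) is a P-adic completion of K: v is a discrete valuation on KP
   (values on nonzero elements) extending the P-adic valuation of K through
   iota, K is dense in KP, and KP is complete. *)
Definition is_P_completion (F : finFieldType) (P : {poly F}) (KP : fieldType)
    (iota : {rmorphism Kfrac F -> KP}) (v : KP -> int) : Prop :=
  [/\ (forall x y : KP, x != 0 -> y != 0 -> v (x * y) = v x + v y),
      (forall x y : KP, x != 0 -> y != 0 -> x + y != 0 ->
          Num.min (v x) (v y) <= v (x + y)),
      (forall a : {poly F}, a != 0 -> v (iota (tofrac a)) = (pval P a)%:Z),
      (forall (x : KP) (N : int), exists k : Kfrac F, vclose v N x (iota k))
    & (forall u : nat -> KP,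
         (forall N : int, exists M : nat, forall m n : nat,
             (M <= m)%N -> (M <= n)%N -> vclose v N (u m) (u n)) ->
         exists l : KP, forall N : int, exists M : nat, forall n : nat,
             (M <= n)%N -> vclose v N (u n) l)].

(* ---- Anderson t-modules ----
   E a is the list of coefficients [E_{a,0}; E_{a,1}; ...] of the tau-polynomial
   E_a = sum_i E_{a,i} tau^i in M_d(L){tau}. *)
Definition Ecoef (F : finFieldType) (L : fieldExtType (Kfrac F)) (d : nat)
    (E : {poly F} -> seq 'M[L]_d) (a : {poly F}) (i : nat) : 'M[L]_d :=
  nth 0 (E a) i.

(* B^{(q^i)}: entrywise q^i-th power (tau^i B = B^{(q^i)} tau^i). *)
Definition frob_mx (F : finFieldType) (L : fieldExtType (Kfrac F)) (d : nat)
    (i : nat) (B : 'M[L]_d) : 'M[L]_d :=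
  map_mx (fun x => x ^+ (#|F| ^ i)%N) B.

Definition is_Anderson_t_module (F : finFieldType) (L : fieldExtType (Kfrac F))
    (d : nat) (E : {poly F} -> seq 'M[L]_d) : Prop :=
  [/\
      (forall a i r s, integral_over_A ((Ecoef E a i) r s)),
      (forall (c : F) (a b : {poly F}) i,
          Ecoef E (c *: a + b) i = embA L c%:P *: Ecoef E a i + Ecoef E b i),
      (forall i, Ecoef E 1 i = if i == 0%N then 1 else 0),
      (* multiplicativity in the skew ring M_d(L){tau} *)
      (forall a b k, Ecoef E (a * b) k =
          \sum_(i < k.+1) Ecoef E a i *m frob_mx i (Ecoef E b (k - i)%N))
    &
      ((forall a, (Ecoef E a 0 - (embA L a)%:M) ^+ d = 0)
       /\ (exists i, (0 < i)%N /\ Ecoef E 'X i != 0))].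

(* ---- L_P = L (x)_K K_P, in coordinates w.r.t. the K-basis bL of L ---- *)
Definition nL (F : finFieldType) (L : fieldExtType (Kfrac F)) : nat :=
  \dim (fullv : {vspace L}).
Definition bL (F : finFieldType) (L : fieldExtType (Kfrac F)) : (nL L).-tuple L :=
  vbasis (fullv : {vspace L}).

(* an element sum_i bL_i (x) u_i of L (x)_K KP is the row (u_i)_i *)
Definition LPt (F : finFieldType) (L : fieldExtType (Kfrac F)) (KP : fieldType) :=
  'rV[KP]_(nL L).

(* l |-> l (x) 1 *)
Definition inLP (F : finFieldType) (L : fieldExtType (Kfrac F)) (KP : fieldType)
    (iota : {rmorphism Kfrac F -> KP}) (l : L) : LPt L KP :=
  \row_i iota (coord (bL L) i l).

(* multiplication of L (x)_K KP, via structure constants of L over K *)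
Definition mulLP (F : finFieldType) (L : fieldExtType (Kfrac F)) (KP : fieldType)
    (iota : {rmorphism Kfrac F -> KP}) (u w : LPt L KP) : LPt L KP :=
  \row_k \sum_(i < nL L) \sum_(j < nL L)
     iota (coord (bL L) k (tnth (bL L) i * tnth (bL L) j)) * (u 0 i * w 0 j).

(* tau on L (x)_K KP : q-th power *)
Definition tauLP (F : finFieldType) (L : fieldExtType (Kfrac F)) (KP : fieldType)
    (iota : {rmorphism Kfrac F -> KP}) (u : LPt L KP) : LPt L KP :=
  iter #|F| (mulLP iota u) (inLP iota 1).

(* An element of T_z(L_P) = L (x)_K T_z(K_P) is a power series
   sum_n x n z^n with coefficients x n in L (x)_K KP whose coordinates tend
   to 0 P-adically. *)
Definition is_Tate (F : finFieldType) (L : fieldExtType (Kfrac F)) (KP : fieldType)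
    (v : KP -> int) (x : nat -> LPt L KP) : Prop :=
  forall (j : 'I_(nL L)) (N : int), exists M : nat, forall n : nat,
    (M <= n)%N -> vclose v N ((x n) 0 j) 0.

(* z-twist: (E~_a x)_r = sum_i sum_s E_{a,i}[r,s] z^i tau^i (x_s);
   coefficient of z^n of the r-th component. *)
Definition Etwist (F : finFieldType) (L : fieldExtType (Kfrac F)) (KP : fieldType)
    (iota : {rmorphism Kfrac F -> KP}) (d : nat) (E : {poly F} -> seq 'M[L]_d)
    (a : {poly F}) (x : 'I_d -> nat -> LPt L KP) (r : 'I_d) (n : nat) : LPt L KP :=
  \sum_(i < n.+1) \sum_(s < d)
     mulLP iota (inLP iota (Ecoef E a i r s)) (iter i (tauLP iota) (x s (n - i)%N)).

From HB Require Import structures.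
From mathcomp Require Import all_boot all_order all_algebra all_field.
From mathcomp Require Import fraction ring.
Import Order.TTheory GRing.Theory Num.Theory.
Local Open Scope ring_scope.

Set Implicit Arguments.
Unset Strict Implicit.
Unset Printing Implicit Defensive.

(* The constant term E_{a,0} of the z-twist is a + (nilpotent), hence invertible
   for a <> 0, whereas every other term of E~_a raises the z-degree. So E~_a
   maps the lowest nonzero z-coefficient of x to E_{a,0} applied to it, which
   is nonzero. *)

Lemma unitmx_nilpotent_shift (R : comUnitRingType) n k (M : 'M[R]_n.+1) c :
  (M - c%:M) ^+ k = 0 -> c \is a GRing.unit -> M \in unitmx.
Proof.
move=> nilpotent_shift c_unit.
set T := - c^-1 *: (M - c%:M).
have geometric_sum : (T - 1) * \sum_(i < k) T ^+ i = -1.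
  by rewrite -subrX1 /T exprZn nilpotent_shift scaler0 sub0r.
have M_T : M = - c *: (T - 1).
  rewrite /T scalerBr scalerA mulrN mulNr opprK mulrV // scale1r.
  by rewrite scaleNr opprK -scalemx1 subrK.
have [] := @mulmx1_unit _ _ M (c^-1 *: \sum_(i < k) T ^+ i) => //.
rewrite mulmxE -scalerAr {1}M_T -scalerAl geometric_sum scalerA.
by rewrite mulrN mulVr // scaleN1r opprK.
Qed.

Section TensorCoordinates.
Variables (F : finFieldType) (L : fieldExtType {fraction {poly F}}).
Variables (KP : fieldType) (iota : {rmorphism {fraction {poly F}} -> KP}).

Lemma embA_eq0 (a : {poly F}) : (embA L a == 0) = (a == 0).
Proof. by rewrite /embA scaler_eq0 oner_eq0 orbF tofrac_eq0. Qed.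

Lemma bL_coordE (l : L) :
  l = \sum_(i < nL L) coord (bL L) i l *: tnth (bL L) i.
Proof.
rewrite {1}(coord_vbasis (memvf l)); apply: eq_bigr => i _.
by rewrite (tnth_nth 0).
Qed.

(* Coordinates are row vectors, so left multiplication by [l] acts on the
   right and [lmul_coord_mx] reverses products. *)
Definition lmul_coord_mx (l : L) : 'M[{fraction {poly F}}]_(nL L) :=
  \matrix_(j, k) coord (bL L) k (l * tnth (bL L) j).

Lemma lmul_coord_mx_is_zmod_morphism : zmod_morphism lmul_coord_mx.
Proof. by move=> l l'; apply/matrixP => j k; rewrite !mxE mulrBl linearB. Qed.

HB.instance Definition _ := GRing.isZmodMorphism.Build L _ lmul_coord_mx
  lmul_coord_mx_is_zmod_morphism.

Lemma lmul_coord_mxM (l l' : L) :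
  lmul_coord_mx (l * l') = lmul_coord_mx l' *m lmul_coord_mx l.
Proof.
apply/matrixP => j k; rewrite !mxE -mulrA.
rewrite {1}(bL_coordE (l' * tnth (bL L) j)) mulr_sumr linear_sum.
by apply: eq_bigr => m _; rewrite !mxE -scalerAr linearZ.
Qed.

Lemma lmul_coord_mx1 : lmul_coord_mx 1 = 1%:M.
Proof.
apply/matrixP => j k; rewrite !mxE mul1r (tnth_nth 0) coord_free //.
exact: basis_free (vbasisP _).
Qed.

Definition lmulLP (l : L) : 'M[KP]_(nL L) := map_mx iota (lmul_coord_mx l).

Lemma lmulLP_is_zmod_morphism : zmod_morphism lmulLP.
Proof. by move=> l l'; rewrite /lmulLP !raddfB. Qed.

HB.instance Definition _ := GRing.isZmodMorphism.Build L _ lmulLP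
  lmulLP_is_zmod_morphism.

Lemma lmulLPM (l l' : L) : lmulLP (l * l') = lmulLP l' *m lmulLP l.
Proof. by rewrite /lmulLP lmul_coord_mxM map_mxM. Qed.

Lemma lmulLP1 : lmulLP 1 = 1%:M.
Proof. by rewrite /lmulLP lmul_coord_mx1 map_mx1. Qed.

Lemma mulLP_inLP (l : L) (u : LPt L KP) :
  mulLP iota (inLP iota l) u = u *m lmulLP l.
Proof.
apply/rowP => k; rewrite !mxE exchange_big /=; apply: eq_bigr => j _.
rewrite !mxE; have -> : l * tnth (bL L) j =
    \sum_(i < nL L) coord (bL L) i l *: (tnth (bL L) i * tnth (bL L) j).
  rewrite {1}(bL_coordE l) mulr_suml.
  by apply: eq_bigr => i _; rewrite scalerAl.
rewrite linear_sum rmorph_sum mulr_sumr; apply: eq_bigr => i _.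
by rewrite linearZ /= rmorphM /= !mxE; ring.
Qed.

Lemma mul0LP (u : LPt L KP) : mulLP iota 0 u = 0.
Proof.
apply/rowP => k; rewrite !mxE big1 // => i _.
by rewrite big1 // => j _; rewrite mxE mul0r mulr0.
Qed.

Lemma iter_tauLP0 m : iter m (tauLP iota) 0 = 0 :> LPt L KP.
Proof.
have tauLP0 : tauLP iota 0 = 0 :> LPt L KP.
  have : (0 < #|F|)%N by apply/card_gt0P; exists 0.
  by rewrite /tauLP; case: #|F| => // q _; rewrite iterS mul0LP.
by elim: m => //= m ->.
Qed.

Definition actLP d (M : 'M[L]_d) (u : 'I_d -> LPt L KP) (r : 'I_d) : LPt L KP :=
  \sum_(s < d) u s *m lmulLP (M r s).

Lemma actLP_mul d (A B : 'M[L]_d) u r :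
  actLP (A *m B) u r = actLP A (actLP B u) r.
Proof.
rewrite /actLP; under [RHS]eq_bigr => t _ do rewrite mulmx_suml.
rewrite exchange_big /=; apply: eq_bigr => s _.
rewrite mxE raddf_sum mulmx_sumr; apply: eq_bigr => t _.
by rewrite -mulmxA -lmulLPM.
Qed.

Lemma actLP1 d u r : actLP (1%:M : 'M[L]_d) u r = u r.
Proof.
rewrite /actLP (bigD1 r) //= big1 ?addr0 => [|s /negbTE s_r].
  by rewrite mxE eqxx lmulLP1 mulmx1.
by rewrite mxE eq_sym s_r raddf0 mulmx0.
Qed.

Lemma actLP_unit_eq0 d (M : 'M[L]_d) u :
  M \in unitmx -> (forall r, actLP M u r = 0) -> forall s, u s = 0.
Proof.
move=> M_unit Mu0 s; rewrite -actLP1 -(mulVmx M_unit) actLP_mul {1}/actLP.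
by rewrite big1 // => t _; rewrite Mu0 mul0mx.
Qed.

Lemma Etwist_lowest_coef d (E : {poly F} -> seq 'M[L]_d) a x n :
  (forall s m, (m < n)%N -> x s m = 0) ->
  forall r, Etwist iota E a x r n = actLP (Ecoef E a 0) (x^~ n) r.
Proof.
move=> x_lt r; rewrite /Etwist big_ord_recl [X in _ + X]big1 ?addr0 => [|i _].
  by apply: eq_bigr => s _; rewrite subn0 mulLP_inLP.
apply: big1 => s _; rewrite x_lt ?iter_tauLP0 ?mulLP_inLP ?mul0mx //.
by rewrite ltn_subrL /= (leq_ltn_trans (leq0n i) (ltn_ord i)).
Qed.

End TensorCoordinates.

Theorem mainTheorem20 (F : finFieldType) (L : fieldExtType {fraction {poly F}})
    (d : nat) (E : {poly F} -> seq 'M[L]_d)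
    (P : {poly F}) (KP : fieldType) (iota : {rmorphism {fraction {poly F}} -> KP})
    (v : KP -> int) :
  is_Anderson_t_module E ->
  P \is monic -> irreducible_poly P ->
  is_P_completion P iota v ->
  forall a : {poly F}, a != 0 ->
  forall x : 'I_d -> nat -> LPt L KP,
    (forall s, is_Tate v (x s)) ->
    (exists s n, x s n != 0) ->
    exists r n, Etwist iota E a x r n != 0.
Proof.
move=> [_ _ _ _ [E_nilpotent _]] _ _ _ a a_neq0 x _ [s0 [n0 x_s0_n0]].
move: E x E_nilpotent s0 x_s0_n0; case: d => [|d] E x E_nilpotent s0 x_s0_n0.
  by case: s0 x_s0_n0.
have E0_unit : Ecoef E a 0 \in unitmx.
  by rewrite (unitmx_nilpotent_shift (E_nilpotent a)) // unitfE embA_eq0.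
have x_neq0 : exists n, [exists s, x s n != 0].
  by exists n0; apply/existsP; exists s0.
have [n /existsP[s x_s_n] n_min] := ex_minnP x_neq0.
have x_lt s' m : (m < n)%N -> x s' m = 0.
  apply: contraTeq => x_s'_m; rewrite -leqNgt.
  by apply: n_min; apply/existsP; exists s'.
have [/existsP[r Ex_r] | /existsPn Ex0] :=
  boolP [exists r, Etwist iota E a x r n != 0]; first by exists r, n.
case/eqP: x_s_n.
apply: (actLP_unit_eq0 (iota := iota) (u := x^~ n) E0_unit) => r.
by rewrite -Etwist_lowest_coef //; apply/eqP/negbNE/Ex0.
Qed.
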